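(* Let $N\ge1$, $K>0$, $r_i>0$, let $(\mu_{ij})$ be a nonnegative, symmetric, irreducible $N\times N$ matrix, and let $\Psi_1,\dots,\Psi_N:\mathbb{R}^N\to\mathbb{R}$ be locally Lipschitz, with $\Psi_i(0)=0$, monotone increasing for the componentwise order, and such that for each $i$ there exist positive $R_i,k_i,c_i$ with $c_i(\sum_jv_j)^{k_i}\le\Psi_i(v)$ for all $v\in[0,\infty)^N$ with $\sum_j|v_j|\ge R_i$. Let $v$ be a positive solution and $\bar v$ a positive stationary solution of $$\frac{dv_i}{dt}=v_i\left[r_i-\frac{1}{K}\Psi_i(v)\right]+\sum_{j=1}^N\mu_{ij}(v_j-v_i),\qquad i=1,\dots,N.$$ Then (i) $\displaystyle\frac{d}{dt}\left(\sum_{i=1}^Nv_i\bar v_i\right)=\frac1K\sum_{i=1}^N(\Psi_i(\bar v)-\Psi_i(v))v_i\bar v_i$; (ii) $\displaystyle\frac{d}{dt}\left(\sum_{i=1}^Nv_i^2\right)=-\sum_{i,j=1}^N\mu_{ij}\bar v_i\bar v_j\left(\frac{v_i}{\bar v_i}-\frac{v_j}{\bar v_j}\right)^2+\frac2K\sum_{i=1}^Nv_i^2\left(\Psi_i(\bar v)-\Psi_i(v)\right)$.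
   Context: Positive means all components strictly positive; a stationary solution is a vector at which the right-hand side vanishes for every $i$. *)

From HB Require Import structures.
From mathcomp Require Import all_boot all_order all_algebra.
From mathcomp Require Import all_classical all_reals all_analysis.
Set Implicit Arguments. Unset Strict Implicit. Unset Printing Implicit Defensive.
Import Order.TTheory GRing.Theory Num.Theory.
Import numFieldNormedType.Exports.
Local Open Scope ring_scope.

(* f is locally Lipschitz on R^N (max norm on row vectors; all norms equivalent). *)
Definition locally_lipschitz (R : realType) (N : nat) (f : 'rV[R]_N -> R) : Prop :=
  forall x : 'rV[R]_N, exists2 d : R, 0 < d &
    exists L : R, forall y z : 'rV[R]_N,
      `|y - x| < d -> `|z - x| < d -> `|f y - f z| <= L * `|y - z|.

Definition monotone_cw (R : realType) (N : nat) (f : 'rV[R]_N -> R) : Prop :=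
  forall u w : 'rV[R]_N, (forall j, u ord0 j <= w ord0 j) -> f u <= f w.

Definition growth_cond (R : realType) (N : nat) (f : 'rV[R]_N -> R) : Prop :=
  exists R0 k c : R, [/\ 0 < R0, 0 < k, 0 < c &
    forall v : 'rV[R]_N, (forall j, 0 <= v ord0 j) ->
      R0 <= \sum_j `|v ord0 j| ->
      c * powR (\sum_j v ord0 j) k <= f v].

Definition irreducible_mx (R : realType) (N : nat) (mu : 'M[R]_N) : Prop :=
  forall S : {set 'I_N}, S != finset.set0 -> S != [set: 'I_N]%SET ->
    exists i, exists j, [/\ i \in S, j \notin S & mu i j != 0].

Definition rhs (R : realType) (N : nat) (K : R) (r : 'I_N -> R) (mu : 'M[R]_N)
  (Psi : 'I_N -> 'rV[R]_N -> R) (v : 'rV[R]_N) (i : 'I_N) : R :=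
  v ord0 i * (r i - K^-1 * Psi i v) + \sum_j mu i j * (v ord0 j - v ord0 i).

(* Stationarity of vbar lets one eliminate the growth rates r_i: with
   x_i = v_i / vbar_i, the i-th equation becomes
   v_i' = K^-1 (Psi_i vbar - Psi_i v) v_i + sum_j mu_ij vbar_j (x_j - x_i).
   Multiplying by vbar_i (resp. 2 v_i) and summing over i, the diffusion part
   is an antisymmetric double sum (resp. a Dirichlet form) for the symmetric
   weights mu_ij vbar_i vbar_j, which vanishes (resp. becomes
   -sum_ij mu_ij vbar_i vbar_j (x_i - x_j)^2). *)

From HB Require Import structures.
From mathcomp Require Import all_boot all_order all_algebra.
From mathcomp Require Import all_classical all_reals all_analysis.
From mathcomp Require Import ring.

Set Implicit Arguments.
Unset Strict Implicit.
Unset Printing Implicit Defensive.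
Import Order.TTheory GRing.Theory Num.Theory.
Import numFieldNormedType.Exports.
Local Open Scope ring_scope.

Section SymmetricDoubleSums.
Variables (R : comPzRingType) (n : nat) (F : 'I_n -> 'I_n -> R).
Hypothesis F_sym : forall i j, F i j = F j i.

Lemma sum_sym_swap (G : 'I_n -> 'I_n -> R) :
  \sum_i \sum_j F i j * G i j = \sum_i \sum_j F i j * G j i.
Proof. by rewrite exchange_big; apply: eq_bigr => i _; under eq_bigr do rewrite F_sym. Qed.

Lemma sum_sym_antisym_eq0 (x : 'I_n -> R) :
  \sum_i \sum_j F i j * (x j - x i) = 0.
Proof.
under eq_bigr do under eq_bigr do rewrite mulrBr.
under eq_bigr do rewrite sumrB.
by rewrite sumrB (sum_sym_swap (fun _ j => x j)) subrr.
Qed.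

Lemma sum_sym_dirichlet (x : 'I_n -> R) :
  \sum_i \sum_j F i j * (x i - x j) ^+ 2
  = 2 * \sum_i \sum_j F i j * (x i * (x i - x j)).
Proof.
rewrite mulr_natl mulr2n {2}(sum_sym_swap (fun i j => x i * (x i - x j))) -big_split /=.
by apply: eq_bigr => i _; rewrite -big_split; apply: eq_bigr => j _ /=; ring.
Qed.

End SymmetricDoubleSums.

Section DeriveSums.
Variables (R : numFieldType) (n : nat) (f : 'I_n -> R -> R) (t : R) (df : 'I_n -> R).
Hypothesis f_derive : forall i, is_derive t 1 (f i) (df i).

Lemma is_derive_sum_mulr (c : 'I_n -> R) :
  is_derive t 1 (fun s => \sum_i f i s * c i) (\sum_i df i * c i).
Proof.
have -> : (fun s => \sum_i f i s * c i) = \sum_i (c i \*: f i).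
  by apply/funext => s; rewrite fct_sumE; apply: eq_bigr => i _; rewrite mulrC.
apply: is_derive_sum => i; apply: is_derive_eq (is_deriveZ _ (f_derive i)) _.
by rewrite mulrC.
Qed.

Lemma is_derive_sum_sqr :
  is_derive t 1 (fun s => \sum_i f i s ^+ 2) (\sum_i 2 * f i t * df i).
Proof.
have -> : (fun s => \sum_i f i s ^+ 2) = \sum_i (f i ^+ 2).
  by apply/funext => s; rewrite fct_sumE; apply: eq_bigr => i _; rewrite /= expr2.
apply: is_derive_sum => i; exact: is_deriveX 2 (f_derive i).
Qed.

End DeriveSums.

Lemma rhs_stationaryE (R : realType) (N : nat) (K : R) (r : 'I_N -> R)
    (mu : 'M[R]_N) (Psi : 'I_N -> 'rV[R]_N -> R) (vbar w : 'rV[R]_N) (i : 'I_N) :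
  (forall j, vbar ord0 j != 0) -> rhs K r mu Psi vbar i = 0 ->
  rhs K r mu Psi w i
  = K^-1 * (Psi i vbar - Psi i w) * w ord0 i
    + \sum_j mu i j * vbar ord0 j * (w ord0 j / vbar ord0 j - w ord0 i / vbar ord0 i).
Proof.
rewrite /rhs => vbar0 /eqP; rewrite addrC addr_eq0 => /eqP stat.
have -> : \sum_j mu i j * vbar ord0 j * (w ord0 j / vbar ord0 j - w ord0 i / vbar ord0 i)
    = \sum_j mu i j * (w ord0 j - w ord0 i)
      - w ord0 i / vbar ord0 i * \sum_j mu i j * (vbar ord0 j - vbar ord0 i).
  rewrite mulr_sumr -sumrB; apply: eq_bigr => j _; field; by rewrite !vbar0.
(* Generalizing K^-1 spares [field] the side condition K != 0. *)
rewrite stat; move: (K^-1) => k; field; exact: vbar0.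
Qed.

Theorem lemma3p2 (R : realType) (N : nat) (K : R) (r : 'I_N -> R)
  (mu : 'M[R]_N) (Psi : 'I_N -> 'rV[R]_N -> R)
  (D : set R) (v : R -> 'rV[R]_N) (vbar : 'rV[R]_N) :
  (0 < N)%N -> 0 < K -> (forall i, 0 < r i) ->
  (forall i j, 0 <= mu i j) -> mu^T = mu -> irreducible_mx mu ->
  (forall i, locally_lipschitz (Psi i)) ->
  (forall i, Psi i 0 = 0) ->
  (forall i, monotone_cw (Psi i)) ->
  (forall i, growth_cond (Psi i)) ->
  (forall t, D t -> forall i, 0 < v t ord0 i) ->
  (forall t, D t -> forall i,
     is_derive t 1 (fun s => v s ord0 i) (rhs K r mu Psi (v t) i)) ->
  (forall i, 0 < vbar ord0 i) ->
  (forall i, rhs K r mu Psi vbar i = 0) ->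
  forall t, D t ->
    is_derive t 1 (fun s => \sum_i v s ord0 i * vbar ord0 i)
      (K^-1 * \sum_i (Psi i vbar - Psi i (v t)) * v t ord0 i * vbar ord0 i)
 /\ is_derive t 1 (fun s => \sum_i v s ord0 i ^+ 2)
      (- \sum_i \sum_j mu i j * vbar ord0 i * vbar ord0 j
            * (v t ord0 i / vbar ord0 i - v t ord0 j / vbar ord0 j) ^+ 2
       + 2 / K * \sum_i v t ord0 i ^+ 2 * (Psi i vbar - Psi i (v t))).
Proof.
move=> _ K_gt0 _ _ mu_sym _ _ _ _ _ _ v_derive vbar_gt0 vbar_stat t Dt.
have vbar0 j : vbar ord0 j != 0 by rewrite gt_eqF.
pose x i := v t ord0 i / vbar ord0 i.
pose F i j := mu i j * vbar ord0 i * vbar ord0 j.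
have F_sym i j : F i j = F j i by rewrite /F -{1}mu_sym mxE; ring.
have rhsE i := @rhs_stationaryE _ _ K r mu Psi vbar (v t) i vbar0 (vbar_stat i).
split.
- apply: is_derive_eq (is_derive_sum_mulr (v_derive t Dt) (fun i => vbar ord0 i)) _.
  under eq_bigr do rewrite rhsE mulrDl.
  rewrite big_split /= mulr_sumr.
  rewrite [X in _ + X](_ : _ = \sum_i \sum_j F i j * (x j - x i)); last first.
    by apply: eq_bigr => i _; rewrite mulr_suml; apply: eq_bigr => j _; rewrite /F /x /=; ring.
  by rewrite sum_sym_antisym_eq0 // addr0; apply: eq_bigr => i _; ring.
- apply: is_derive_eq (is_derive_sum_sqr (v_derive t Dt)) _.
  rewrite (sum_sym_dirichlet F_sym x) -mulrN -sumrN !mulr_sumr -big_split /=.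
  apply: eq_bigr => i _; rewrite rhsE mulrDr addrC; congr (_ + _); first by ring.
  rewrite -sumrN !mulr_sumr; apply: eq_bigr => j _; rewrite /F /x; field.
  by rewrite !vbar0.
Qed.
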